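(* Let $\mathbf{Cont}_{0,0}$ be the 1-category whose objects are set-truncated containers and whose morphisms are cartesian morphisms. The functor $(-)\times \mathrm{Id} : \mathbf{Cont}_{0,0}\to\mathbf{Cont}_{0,0}$ is left adjoint to the derivative functor $\partial : \mathbf{Cont}_{0,0}\to\mathbf{Cont}_{0,0}$; that is, $(-)\times\mathrm{Id} \dashv \partial$.
   Context: We work in Homotopy Type Theory (univalent universe $\mathsf{Type}$, function extensionality). A point $a:A$ is isolated if $a=b$ is decidable for every $b:A$; $A^{\circ}:=\sum_{a:A}\prod_{b:A}\mathrm{Dec}(a=b)$ denotes the subtype of isolated points, and for $a_0:A$, $A\setminus a_0 := \sum_{a:A} \neg(a_0=a)$. A container $(S\triangleleft P)$ consists of a type $S$ of shapes and a family $P:S\to\mathsf{Type}$ of positions; it is set-truncated if $S$ and every $P_s$ are sets. A cartesian morphism $(S\triangleleft P)\multimap(T\triangleleft Q)$ is a pair $(f,u)$ with $f:S\to T$ and $u:\prod_{s:S} Q_{f s}\simeq P_s$; composition is $(g,v)\circ(f,u)=(g\circ f,\ \lambda s.\,u_s\circ v_{f s})$. The identity container is $\mathrm{Id}:=(1\triangleleft \lambda\_.\,1)$, and the product is $(S\triangleleft P)\times(T\triangleleft Q):=(S\times T\triangleleft \lambda(s,t).\,P_s+Q_t)$; on morphisms, $(-)\times\mathrm{Id}$ sends $(f,u)$ to $(f\times\mathrm{id},\ \lambda s.\,u_s+\mathrm{id}_1)$. The derivative is $\partial(S\triangleleft P):=\big(\sum_{s:S}(P_s)^{\circ}\ \triangleleft\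 \lambda(s,p).\,P_s\setminus p\big)$; on a morphism $(f,u)$ it acts on shapes by $(s,p)\mapsto (f s, u_s^{-1}(p))$ (equivalences preserve isolated points) and on positions by the restriction of $u_s$ to an equivalence $Q_{fs}\setminus u_s^{-1}(p)\simeq P_s\setminus p$. *)

(* HoTT notions rendered set-level: equality of morphisms is Leibniz. *)
From Stdlib Require Import ProofIrrelevance.
Set Implicit Arguments.

Definition isSet (A : Type) : Prop := forall (x y : A) (p q : x = y), p = q.

Definition Dec (A : Type) : Type := (A + (A -> False))%type.

(* Equivalences (for sets, quasi-inverse data is a proposition) *)
Record Equiv (A B : Type) := {
  eqv :> A -> B;
  eqv_inv : B -> A;
  eqv_sect : forall a, eqv_inv (eqv a) = a;
  eqv_retr : forall b, eqv (eqv_inv b) = b }.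

Definition equiv_id (A : Type) : Equiv A A :=
  {| eqv := fun a => a; eqv_inv := fun a => a;
     eqv_sect := fun a => eq_refl; eqv_retr := fun a => eq_refl |}.

Definition equiv_comp (A B C : Type) (e1 : Equiv A B) (e2 : Equiv B C) : Equiv A C.
Proof.
  refine {| eqv := fun a => e2 (e1 a); eqv_inv := fun c => eqv_inv e1 (eqv_inv e2 c) |}.
  - intro a; rewrite eqv_sect, eqv_sect; reflexivity.
  - intro c; rewrite eqv_retr, eqv_retr; reflexivity.
Defined.

Definition equiv_sum (A B C D : Type) (e1 : Equiv A B) (e2 : Equiv C D) :
  Equiv (A + C) (B + D).
Proof.
  refine {| eqv := fun x => match x with inl a => inl (e1 a) | inr c => inr (e2 c) end;
            eqv_inv := fun y => match y with inl b => inl (eqv_inv e1 b)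
                                         | inr d => inr (eqv_inv e2 d) end |}.
  - intros [a|c]; rewrite eqv_sect; reflexivity.
  - intros [b|d]; rewrite eqv_retr; reflexivity.
Defined.

Definition Isolated (A : Type) : Type := {a : A & forall b : A, Dec (a = b)}.
Definition Minus (A : Type) (a0 : A) : Type := {a : A & ~ (a0 = a)}.

Record Cont := { Sh : Type; Pos : Sh -> Type }.

Definition isSetCont (F : Cont) : Prop :=
  isSet (Sh F) /\ forall s, isSet (Pos F s).

Record CMor (F G : Cont) := {
  shp : Sh F -> Sh G;
  pos : forall s : Sh F, Equiv (Pos G (shp s)) (Pos F s) }.

Definition cm_id (F : Cont) : CMor F F :=
  {| shp := fun s => s; pos := fun s => equiv_id (Pos F s) |}.

Definition cm_comp (F G H : Cont) (g : CMor G H) (f : CMor F G) : CMor F H :=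
  {| shp := fun s => shp g (shp f s);
     pos := fun s => equiv_comp (pos g (shp f s)) (pos f s) |}.

Definition IdC : Cont := {| Sh := unit; Pos := fun _ => unit |}.

Definition cprod (F G : Cont) : Cont :=
  {| Sh := (Sh F * Sh G)%type;
     Pos := fun st => (Pos F (fst st) + Pos G (snd st))%type |}.

Definition prodId (F : Cont) : Cont := cprod F IdC.

Definition prodId_mor (F G : Cont) (m : CMor F G) : CMor (prodId F) (prodId G) :=
  {| shp := fun st : Sh (prodId F) => (shp m (fst st), snd st) : Sh (prodId G);
     pos := fun st => equiv_sum (pos m (fst st)) (equiv_id unit) |}.

Definition deriv (F : Cont) : Cont :=
  {| Sh := {s : Sh F & Isolated (Pos F s)};
     Pos := fun sp => Minus (projT1 (projT2 sp)) |}.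

Definition isolated_inv (A B : Type) (e : Equiv A B) (p : Isolated B) : Isolated A.
Proof.
  exists (eqv_inv e (projT1 p)).
  intro b. destruct (projT2 p (e b)) as [h|h].
  - left. rewrite h, eqv_sect. reflexivity.
  - right. intro h'. apply h. rewrite <- h', eqv_retr. reflexivity.
Defined.

Lemma Minus_eq (A : Type) (a0 : A) (x y : Minus a0) : projT1 x = projT1 y -> x = y.
Proof.
  destruct x as [x hx], y as [y hy]; simpl; intro E; subst y.
  rewrite (proof_irrelevance _ hx hy). reflexivity.
Qed.

Definition minus_equiv (A B : Type) (e : Equiv A B) (p : B) :
  Equiv (Minus (eqv_inv e p)) (Minus p).
Proof.
  unshelve refine {| eqv := fun x => existT _ (e (projT1 x)) _;
                     eqv_inv := fun y => existT _ (eqv_inv e (projT1 y)) _ |}.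
  - intro h. apply (projT2 x). pose proof (f_equal (eqv_inv e) h) as h2.
    rewrite eqv_sect in h2. exact h2.
  - intro h. apply (projT2 y).
    pose proof (f_equal e h) as h2. rewrite !eqv_retr in h2. exact h2.
  - intro x. apply Minus_eq. simpl. apply eqv_sect.
  - intro y. apply Minus_eq. simpl. apply eqv_retr.
Defined.

Definition deriv_mor (F G : Cont) (m : CMor F G) : CMor (deriv F) (deriv G) :=
  {| shp := fun sp : Sh (deriv F) =>
       existT (fun t => Isolated (Pos G t)) (shp m (projT1 sp))
              (isolated_inv (pos m (projT1 sp)) (projT2 sp)) : Sh (deriv G);
     pos := fun sp => minus_equiv (pos m (projT1 sp)) (projT1 (projT2 sp)) |}.

From Stdlib Require Import ProofIrrelevance FunctionalExtensionality.
Set Implicit Arguments.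

(* The adjunction is built from a unit F -> d(F x Id), sending s to the shape
   (s, tt) with the new isolated position inr tt, and a counit d G x Id -> G,
   given at (t, i) by the decomposition P_t = (P_t \ i) + 1 available for an
   isolated point i.
   Proof irrelevance makes every type a set. *)

Lemma isSet_all (A : Type) : isSet A.
Proof. intros x y p q; apply proof_irrelevance. Qed.

Lemma isSetCont_all (F : Cont) : isSetCont F.
Proof. split; [|intro s]; apply isSet_all. Qed.

Lemma Equiv_ext (A B : Type) (e1 e2 : Equiv A B) :
  (forall a, e1 a = e2 a) -> e1 = e2.
Proof.
  intro H.
  assert (Hinv : forall b, eqv_inv e1 b = eqv_inv e2 b).
  { intro b. rewrite <- (eqv_sect e2 (eqv_inv e1 b)), <- H, eqv_retr. reflexivity. }
  destruct e1 as [f1 g1 s1 r1], e2 as [f2 g2 s2 r2]; simpl in *.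
  assert (f1 = f2) by (apply functional_extensionality; exact H). subst f2.
  assert (g1 = g2) by (apply functional_extensionality; exact Hinv). subst g2.
  rewrite (proof_irrelevance _ s1 s2), (proof_irrelevance _ r1 r2). reflexivity.
Qed.

Lemma Isolated_eq (A : Type) (i j : Isolated A) : projT1 i = projT1 j -> i = j.
Proof.
  destruct i as [a da], j as [b db]; simpl; intro E; subst b.
  f_equal. apply functional_extensionality_dep; intro c.
  destruct (da c) as [h1|h1], (db c) as [h2|h2]; try contradiction.
  - rewrite (proof_irrelevance _ h1 h2); reflexivity.
  - f_equal. apply functional_extensionality; intro x; contradiction.
Qed.

(* Comparing morphisms through these dependent pairs avoids transporting
   positions along equalities of shapes. *)
Definition cm_at (F G : Cont) (f : CMor F G) (s : Sh F) :
  {t : Sh G & Equiv (Pos G t) (Pos F s)} :=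
  existT _ (shp f s) (pos f s).

Lemma CMor_ext (F G : Cont) (f g : CMor F G) :
  (forall s, cm_at f s = cm_at g s) -> f = g.
Proof.
  intro H.
  assert (E : cm_at f = cm_at g) by (apply functional_extensionality_dep; exact H).
  destruct f as [fs fp], g as [gs gp].
  change (Build_CMor F G (fun s => projT1 (cm_at (Build_CMor F G fs fp) s))
                         (fun s => projT2 (cm_at (Build_CMor F G fs fp) s))
          = Build_CMor F G (fun s => projT1 (cm_at (Build_CMor F G gs gp) s))
                           (fun s => projT2 (cm_at (Build_CMor F G gs gp) s))).
  rewrite E. reflexivity.
Qed.

Lemma deriv_at_eq (G : Cont) (P : Type) (t : Sh G) (i j : Isolated (Pos G t))
  (e : Equiv (Minus (projT1 i)) P) (e' : Equiv (Minus (projT1 j)) P) :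
  projT1 i = projT1 j ->
  (forall b b', projT1 b = projT1 b' -> e b = e' b') ->
  existT (fun x : Sh (deriv G) => Equiv (Pos (deriv G) x) P) (existT _ t i) e
  = existT _ (existT _ t j) e'.
Proof.
  intros Eij He. apply Isolated_eq in Eij. subst j.
  f_equal. apply Equiv_ext; intro b. apply He; reflexivity.
Qed.

Lemma cm_comp_assoc (F G H K : Cont) (h : CMor H K) (g : CMor G H) (f : CMor F G) :
  cm_comp h (cm_comp g f) = cm_comp (cm_comp h g) f.
Proof. apply CMor_ext; intro s. unfold cm_at; f_equal. apply Equiv_ext; reflexivity. Qed.

Lemma cm_comp_id_l (F G : Cont) (f : CMor F G) : cm_comp (cm_id G) f = f.
Proof. apply CMor_ext; intro s. unfold cm_at; f_equal. apply Equiv_ext; reflexivity. Qed.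

Lemma cm_comp_id_r (F G : Cont) (f : CMor F G) : cm_comp f (cm_id F) = f.
Proof. apply CMor_ext; intro s. unfold cm_at; f_equal. apply Equiv_ext; reflexivity. Qed.

Lemma prodId_mor_id (F : Cont) : prodId_mor (cm_id F) = cm_id (prodId F).
Proof.
  apply CMor_ext; intros [s u]. unfold cm_at; f_equal.
  apply Equiv_ext; intros [a|[]]; reflexivity.
Qed.

Lemma prodId_mor_comp (F G H : Cont) (g : CMor G H) (f : CMor F G) :
  prodId_mor (cm_comp g f) = cm_comp (prodId_mor g) (prodId_mor f).
Proof.
  apply CMor_ext; intros [s u]. unfold cm_at; f_equal.
  apply Equiv_ext; intros [a|[]]; reflexivity.
Qed.

Lemma deriv_mor_id (F : Cont) : deriv_mor (cm_id F) = cm_id (deriv F).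
Proof.
  apply CMor_ext; intros [t i]. apply deriv_at_eq; [reflexivity|].
  intros b b' E. apply Minus_eq. exact E.
Qed.

Lemma deriv_mor_comp (F G H : Cont) (g : CMor G H) (f : CMor F G) :
  deriv_mor (cm_comp g f) = cm_comp (deriv_mor g) (deriv_mor f).
Proof.
  apply CMor_ext; intros [t i]. apply deriv_at_eq; [reflexivity|].
  intros b b' E. apply Minus_eq. simpl in *. rewrite E. reflexivity.
Qed.

Definition inr_isolated (B : Type) : Isolated (B + unit).
Proof.
  exists (inr tt). intros [b|[]].
  - right; discriminate.
  - left; reflexivity.
Defined.

Definition minus_inr_equiv (B : Type) : Equiv (Minus (inr tt : B + unit)) B.
Proof.
  unshelve refine {| eqv := fun x => match projT1 x as y return inr tt <> y -> B with
                                     | inl b => fun _ => b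
                                     | inr u => fun n => False_rect _ (n _)
                                     end (projT2 x);
                     eqv_inv := fun b => existT _ (inl b) _ |}.
  - destruct u; reflexivity.
  - discriminate.
  - intros [[b|[]] n]; [apply Minus_eq; reflexivity | contradiction n; reflexivity].
  - reflexivity.
Defined.

Definition isolated_split (A : Type) (i : Isolated A) :
  Equiv A (Minus (projT1 i) + unit).
Proof.
  refine {| eqv := fun a => match projT2 i a with
                            | inl _ => inr tt
                            | inr n => inl (existT _ a n) end;
            eqv_inv := fun y => match y with
                                | inl x => projT1 x
                                | inr _ => projT1 i end |}.
  - intro a. destruct (projT2 i a) as [h|n]; [exact h | reflexivity].
  - intros [[a n]|[]]; simpl.
    + destruct (projT2 i a) as [h|n']; [contradiction|].
      f_equal. apply Minus_eq. reflexivity.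
    + destruct (projT2 i (projT1 i)) as [h|n]; [reflexivity | contradiction n; reflexivity].
Defined.

Definition adj_unit (F : Cont) : CMor F (deriv (prodId F)) :=
  {| shp := fun s : Sh F =>
       existT (fun st => Isolated (Pos (prodId F) st)) (s, tt) (inr_isolated (Pos F s))
       : Sh (deriv (prodId F));
     pos := fun s => minus_inr_equiv (Pos F s) |}.

Definition adj_counit (G : Cont) : CMor (prodId (deriv G)) G :=
  {| shp := fun x : Sh (prodId (deriv G)) => projT1 (fst x);
     pos := fun x => isolated_split (projT2 (fst x)) |}.

Lemma adj_unit_natural (F G : Cont) (a : CMor F G) :
  cm_comp (adj_unit G) a = cm_comp (deriv_mor (prodId_mor a)) (adj_unit F).
Proof.
  apply CMor_ext; intro s. apply deriv_at_eq; [reflexivity|].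
  intros [[x|[]] n] [x' n'] E; simpl in E; subst x'; [reflexivity | contradiction n; reflexivity].
Qed.

Lemma adj_counit_natural (G G' : Cont) (b : CMor G G') :
  cm_comp b (adj_counit G) = cm_comp (adj_counit G') (prodId_mor (deriv_mor b)).
Proof.
  apply CMor_ext; intros [[t i] u]. unfold cm_at; f_equal.
  apply Equiv_ext; intro y. simpl.
  destruct (projT2 i (pos b t y)); [reflexivity|].
  f_equal. apply Minus_eq. reflexivity.
Qed.

Lemma adj_triangle_l (F : Cont) :
  cm_comp (adj_counit (prodId F)) (prodId_mor (adj_unit F)) = cm_id (prodId F).
Proof.
  apply CMor_ext; intros [s []]. unfold cm_at; f_equal.
  apply Equiv_ext; intros [a|[]]; reflexivity.
Qed.

Lemma adj_triangle_r (G : Cont) :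
  cm_comp (deriv_mor (adj_counit G)) (adj_unit (deriv G)) = cm_id (deriv G).
Proof.
  apply CMor_ext; intros [t i]. apply deriv_at_eq; [reflexivity|].
  intros [a n] b' E. simpl in *.
  destruct (projT2 i a) as [h|n']; [contradiction|].
  apply Minus_eq. exact E.
Qed.

Definition adj_phi (F G : Cont) (h : CMor (prodId F) G) : CMor F (deriv G) :=
  cm_comp (deriv_mor h) (adj_unit F).

Definition adj_psi (F G : Cont) (k : CMor F (deriv G)) : CMor (prodId F) G :=
  cm_comp (adj_counit G) (prodId_mor k).

Lemma adj_psi_phi (F G : Cont) (h : CMor (prodId F) G) : adj_psi (adj_phi h) = h.
Proof.
  unfold adj_psi, adj_phi.
  rewrite prodId_mor_comp, cm_comp_assoc, <- adj_counit_natural, <- cm_comp_assoc.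
  rewrite adj_triangle_l. apply cm_comp_id_r.
Qed.

Lemma adj_phi_psi (F G : Cont) (k : CMor F (deriv G)) : adj_phi (adj_psi k) = k.
Proof.
  unfold adj_psi, adj_phi.
  rewrite deriv_mor_comp, <- cm_comp_assoc, <- adj_unit_natural, cm_comp_assoc.
  rewrite adj_triangle_r. apply cm_comp_id_l.
Qed.

Lemma adj_phi_natural (F F' G G' : Cont)
  (a : CMor F' F) (b : CMor G G') (h : CMor (prodId F) G) :
  adj_phi (cm_comp b (cm_comp h (prodId_mor a)))
  = cm_comp (deriv_mor b) (cm_comp (adj_phi h) a).
Proof.
  unfold adj_phi.
  rewrite !deriv_mor_comp, <- !cm_comp_assoc, adj_unit_natural.
  reflexivity.
Qed.

Theorem theorem3p11 :
  (* both constructions stay in Cont_{0,0} *)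
  (forall F : Cont, isSetCont F -> isSetCont (prodId F)) /\
  (forall F : Cont, isSetCont F -> isSetCont (deriv F)) /\
  (* functoriality *)
  (forall F : Cont, isSetCont F -> prodId_mor (cm_id F) = cm_id (prodId F)) /\
  (forall F : Cont, isSetCont F -> deriv_mor (cm_id F) = cm_id (deriv F)) /\
  (forall (F G H : Cont), isSetCont F -> isSetCont G -> isSetCont H ->
     forall (g : CMor G H) (f : CMor F G),
       prodId_mor (cm_comp g f) = cm_comp (prodId_mor g) (prodId_mor f)) /\
  (forall (F G H : Cont), isSetCont F -> isSetCont G -> isSetCont H ->
     forall (g : CMor G H) (f : CMor F G),
       deriv_mor (cm_comp g f) = cm_comp (deriv_mor g) (deriv_mor f)) /\
  (* the adjunction (-) x Id -| partial *)
  exists (phi : forall F G : Cont, CMor (prodId F) G -> CMor F (deriv G))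
         (psi : forall F G : Cont, CMor F (deriv G) -> CMor (prodId F) G),
    (forall F G : Cont, isSetCont F -> isSetCont G ->
       (forall h : CMor (prodId F) G, psi F G (phi F G h) = h) /\
       (forall k : CMor F (deriv G), phi F G (psi F G k) = k)) /\
    (forall F F' G G' : Cont,
       isSetCont F -> isSetCont F' -> isSetCont G -> isSetCont G' ->
       forall (a : CMor F' F) (b : CMor G G') (h : CMor (prodId F) G),
         phi F' G' (cm_comp b (cm_comp h (prodId_mor a)))
         = cm_comp (deriv_mor b) (cm_comp (phi F G h) a)).
Proof.
  split; [intros F _; apply isSetCont_all|].
  split; [intros F _; apply isSetCont_all|].
  split; [intros F _; apply prodId_mor_id|].
  split; [intros F _; apply deriv_mor_id|].
  split; [intros F G H _ _ _; apply prodId_mor_comp|].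
  split; [intros F G H _ _ _; apply deriv_mor_comp|].
  exists (@adj_phi), (@adj_psi). split.
  - intros F G _ _. split; [apply adj_psi_phi | apply adj_phi_psi].
  - intros F F' G G' _ _ _ _. apply adj_phi_natural.
Qed.
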